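(* Let $\mathcal V$ be a multivector field on $X$, assume $X$ is invariant, and let $\mathcal M=\{M_p\mid p\in\mathbb P\}$ be a Morse decomposition of $X$ indexed by a finite poset $(\mathbb P,\le)$. If $I\subset\mathbb P$ is convex, then $(M(I^{\le}),M(I^{<}))$ is an index pair for the isolated invariant set $M(I)$.
   Context: $X$ is a finite $T_0$ topological space. For $A\subset X$, $\operatorname{cl}A$ is its closure and $\operatorname{mo}A:=\operatorname{cl}A\setminus A$. $A$ is locally closed if it is the intersection of an open and a closed subset of $X$. $H$ denotes relative singular homology. A multivector is a nonempty locally closed subset of $X$; a multivector field $\mathcal V$ on $X$ is a partition of $X$ into multivectors. For $x\in X$, $[x]$ denotes the element of $\mathcal V$ containing $x$. A multivector $V$ is critical if $H(\operatorname{cl}V,\operatorname{mo}V)\neq0$, regular otherwise. $A\subset X$ is $\mathcal V$-compatible if for every $x\in X$ either $[x]\cap A=\emptyset$ or $[x]\subset A$. Put $\Pi_{\mathcal V}(x):=[x]\cup\operatorname{cl}\{x\}$ and $\Pi_{\mathcal V}(A):=\bigcup_{x\in A}\Pi_{\mathcal V}(x)$. A $\mathbb Z$-interval is $\mathbb Z\cap I$ for a real interval $I$. A solution in $A\subset X$ is a map $\varphi:D\to A$ on a $\mathbb Z$-interval $D$ with $\varphi(i+1)\in\Pi_{\mathcal V}(\varphi(i))$ whenever $i,i+1\in D$; it is full if $D=\mathbb Z$, and a path if $D$ is bounded, its endpoints being $\varphi(\min D)$ and $\varphi(\max D)$. A full solution $\varphi$ is essential if for every $t\in\mathbb Z$ with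 $[\varphi(t)]$ regular, the set $\{s\in\mathbb Z:\varphi(s)\notin[\varphi(t)]\}$ is unbounded below and unbounded above. $\operatorname{Inv}A$ is the set of $x\in A$ such that there is an essential full solution $\varphi$ with image in $A$ and $\varphi(0)=x$; $A$ is invariant if $\operatorname{Inv}A=A$. A closed set $N$ isolates an invariant set $S\subset N$ if (a) every path in $N$ with both endpoints in $S$ has image contained in $S$, and (b) $\Pi_{\mathcal V}(S)\subset N$. An invariant set is an isolated invariant set if some closed set isolates it. For a full solution $\varphi$: $\operatorname{uim}^-\varphi:=\bigcap_{t\le0}\varphi((-\infty,t])$, $\operatorname{uim}^+\varphi:=\bigcap_{t\ge0}\varphi([t,\infty))$; the $\mathcal V$-hull $\langle A\rangle_{\mathcal V}$ is the intersection of all $\mathcal V$-compatible locally closed sets containing $A$; $\alpha(\varphi):=\langle\operatorname{uim}^-\varphi\rangle_{\mathcal V}$, $\omega(\varphi):=\langle\operatorname{uim}^+\varphi\rangle_{\mathcal V}$. For invariant $X$ and a finite poset $(\mathbb P,\le)$, a family $\mathcal M=\{M_p\mid p\in\mathbb P\}$ is a Morse decomposition of $X$ if (i) the $M_p$ are mutually disjoint isolated invariant subsets of $X$, and (ii) for every essential full solution $\varphi$ in $X$ either $\operatorname{im}\varphi\subset M_r$ for some $r\in\mathbb P$, or there exist $p,q\in\mathbb P$ with $q>p$, $\alpha(\varphi)\subset M_q$ and $\omega(\varphi)\subset M_p$. For $A,B\subset X$ the connection set $C(A,B)$ is the set of $x\in X$ for which there is an essential full solution $\varphi$ in $X$ with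 $\varphi(0)=x$, $\alpha(\varphi)\subset A$, $\omega(\varphi)\subset B$. For $I\subset\mathbb P$, $M(I):=\bigcup_{i,j\in I}C(M_i,M_j)$ (an isolated invariant set). $I$ is convex if $a\le b\le c$ with $a,c\in I$ implies $b\in I$; $I^{\le}:=\{a\in\mathbb P:\exists b\in I,\ a\le b\}$ and $I^<:=I^{\le}\setminus I$. An index pair for an isolated invariant set $S$ is a pair $(P_1,P_2)$ of closed subsets of $X$ with $P_2\subset P_1$ such that (IP1) if $x\in P_2$ and $y\in\Pi_{\mathcal V}(x)\cap P_1$ then $y\in P_2$; (IP2) if $x\in P_1$ and $\Pi_{\mathcal V}(x)\setminus P_1\neq\emptyset$ then $x\in P_2$; (IP3) $S=\operatorname{Inv}(P_1\setminus P_2)$. *)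

From HB Require Import structures.
From mathcomp Require Import all_boot all_order all_algebra.
From Stdlib Require Import ClassicalEpsilon.
Set Implicit Arguments. Unset Strict Implicit. Unset Printing Implicit Defensive.
Import Order.TTheory GRing.Theory Num.Theory.

Definition pbool (P : Prop) : bool :=
  if excluded_middle_informative P then true else false.

Section FiniteTopology.
Variable X : finType.
Variable opens : {set {set X}}.

Definition is_topology : Prop :=
  [/\ set0 \in opens, [set: X] \in opens,
      (forall U W, U \in opens -> W \in opens -> U :|: W \in opens) &
      (forall U W, U \in opens -> W \in opens -> U :&: W \in opens)].

Definition is_T0 : Prop :=
  forall x y : X, x != y -> exists2 U, U \in opens & (x \in U) != (y \in U).

Definition closedb (A : {set X}) : bool := ~: A \in opens.

Definition cl (A : {set X}) : {set X} :=
  [set x | [forall B : {set X}, (closedb B && (A \subset B)) ==> (x \in B)]].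

Definition mo (A : {set X}) : {set X} := cl A :\: A.

Definition locally_closedb (A : {set X}) : bool :=
  [exists U : {set X}, exists C : {set X},
     [&& U \in opens, closedb C & A == U :&: C]].

(* ---- relative homology of a pair of subspaces (K, L), L ⊆ K ----
   Via McCord's theorem, the singular homology of a finite T0 space is
   the simplicial homology of its order complex (w.r.t. the specialization
   order x <= y iff x \in cl {y}); same for pairs of subspaces.
   Simplices are strictly increasing sequences (canonically oriented),
   integer coefficients. *)
Definition spec_lt (x y : X) : bool := (x != y) && (x \in cl [set y]).

Definition simplex_in (K : {set X}) (s : seq X) : bool :=
  [&& s != [::], sorted spec_lt s & all (fun x => x \in K) s].

Definition rel_simplex (K L : {set X}) (s : seq X) : bool :=
  simplex_in K s && ~~ all (fun x => x \in L) s.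

(* boundary of a chain d supported on sequences of length n+2,
   evaluated at a sequence s of length n+1 *)
Definition bdry (n : nat) (d : seq X -> int) (s : seq X) : int :=
  (\sum_(t : n.+2.-tuple X)
     \sum_(i < n.+2 | s == take i t ++ drop i.+1 t) (-1) ^+ i * d t)%R.

(* relative n-cycle (n-simplices have n+1 vertices) *)
Definition rel_cycle (K L : {set X}) (n : nat) (c : seq X -> int) : Prop :=
  (forall s, c s != 0%R -> rel_simplex K L s && (size s == n.+1)) /\
  (forall m, n = m.+1 -> forall s, rel_simplex K L s -> bdry m c s = 0%R).

Definition rel_boundary (K L : {set X}) (n : nat) (c : seq X -> int) : Prop :=
  exists d : seq X -> int,
    (forall s, d s != 0%R -> simplex_in K s && (size s == n.+2)) /\
    (forall s, rel_simplex K L s -> bdry n d s = c s).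

Definition homology_nonzero (K L : {set X}) : Prop :=
  exists n (c : seq X -> int), rel_cycle K L n c /\ ~ rel_boundary K L n c.

Variable V : {set {set X}}.

Definition multivector_field : Prop :=
  partition V [set: X] /\ forall A, A \in V -> locally_closedb A.

Definition mvclass (x : X) : {set X} := pblock V x.

Definition critical (A : {set X}) : Prop := homology_nonzero (cl A) (mo A).

Definition compatibleb (A : {set X}) : bool :=
  [forall x, [disjoint mvclass x & A] || (mvclass x \subset A)].

Definition Pi (x : X) : {set X} := mvclass x :|: cl [set x].
Definition PiS (A : {set X}) : {set X} := \bigcup_(x in A) Pi x.

Definition full_solution (phi : int -> X) : Prop :=
  forall i : int, phi (i + 1)%R \in Pi (phi i).

Definition essential (phi : int -> X) : Prop :=
  full_solution phi /\
  forall t : int, ~ critical (mvclass (phi t)) ->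
    forall k : int,
      (exists s : int, (s < k)%R /\ phi s \notin mvclass (phi t)) /\
      (exists s : int, (k < s)%R /\ phi s \notin mvclass (phi t)).

Definition Inv (A : {set X}) : {set X} :=
  [set x | pbool (exists phi : int -> X,
                    [/\ essential phi, forall t, phi t \in A & phi 0%R = x])].

Definition mv_invariant (A : {set X}) : Prop := Inv A = A.

(* paths: nonempty finite solutions x0 :: p *)
Definition sol_path (x0 : X) (p : seq X) : bool :=
  path (fun x y => y \in Pi x) x0 p.

Definition isolates (N S : {set X}) : Prop :=
  [/\ closedb N, S \subset N,
      (forall x0 p, sol_path x0 p -> all (fun x => x \in N) (x0 :: p) ->
         x0 \in S -> last x0 p \in S -> all (fun x => x \in S) (x0 :: p)) &
      PiS S \subset N].

Definition isolated_invariant (S : {set X}) : Prop :=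
  mv_invariant S /\ exists N, isolates N S.

Definition uim_minus (phi : int -> X) : {set X} :=
  [set x | pbool (forall t : int, (t <= 0)%R -> exists s, (s <= t)%R /\ phi s = x)].
Definition uim_plus (phi : int -> X) : {set X} :=
  [set x | pbool (forall t : int, (0 <= t)%R -> exists s, (t <= s)%R /\ phi s = x)].

Definition hull (A : {set X}) : {set X} :=
  [set x | [forall B : {set X},
     [&& compatibleb B, locally_closedb B & A \subset B] ==> (x \in B)]].

Definition alpha (phi : int -> X) := hull (uim_minus phi).
Definition omega (phi : int -> X) := hull (uim_plus phi).

Definition morse_decomposition {d : Order.disp_t} (P : finPOrderType d)
    (M : P -> {set X}) : Prop :=
  [/\ (forall p q, p != q -> [disjoint M p & M q]),
      (forall p, isolated_invariant (M p)) &
      (forall phi, essential phi ->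
         (exists r, forall t, phi t \in M r) \/
         (exists p q, [/\ (p < q)%O, alpha phi \subset M q & omega phi \subset M p]))].

Definition conn_set (A B : {set X}) : {set X} :=
  [set x | pbool (exists phi, [/\ essential phi, phi 0%R = x,
                                  alpha phi \subset A & omega phi \subset B])].

Definition MI {d : Order.disp_t} (P : finPOrderType d) (M : P -> {set X})
    (I : {set P}) : {set X} :=
  \bigcup_(i in I) \bigcup_(j in I) conn_set (M i) (M j).

Definition index_pair (S P1 P2 : {set X}) : Prop :=
  [/\ closedb P1 && closedb P2, P2 \subset P1,
      (forall x y, x \in P2 -> y \in Pi x -> y \in P1 -> y \in P2),
      (forall x, x \in P1 -> ~~ (Pi x \subset P1) -> x \in P2) &
      S = Inv (P1 :\: P2)].

End FiniteTopology.

Definition convex {d : Order.disp_t} (P : finPOrderType d) (I : {set P}) : Prop :=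
  forall a b c : P, a \in I -> c \in I -> (a <= b)%O -> (b <= c)%O -> b \in I.

Definition down_le {d : Order.disp_t} (P : finPOrderType d) (I : {set P}) : {set P} :=
  [set a | [exists b in I, (a <= b)%O]].

Definition down_lt {d : Order.disp_t} (P : finPOrderType d) (I : {set P}) : {set P} :=
  down_le I :\: I.

(* Splicing the past of one essential solution to the future of another
   through a common point, or through one step of Pi, gives again an essential
   solution; by the Morse property its alpha- and omega-limits lie in Morse sets
   M_q and M_p with p <= q.  Hence a point of C(M_a, M_b) and C(M_c, M_e)
   forces e <= a, and M(J) is forward invariant for every down-set J, hence
   closed, since in a finite space the closed sets are the sets closed under
   specialization.  Convexity of I makes M(I) disjoint from M(I^<), so M(I)
   is invariant in M(I^<=) \ M(I^<); conversely the limit Morse sets of an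
   essential solution in M(I^<=) \ M(I^<) must be indexed in I. *)

From HB Require Import structures.
From mathcomp Require Import all_boot all_order all_algebra.
From mathcomp Require Import zify.
From Stdlib Require Import ClassicalEpsilon Classical.
Set Implicit Arguments. Unset Strict Implicit. Unset Printing Implicit Defensive.
Import Order.TTheory GRing.Theory Num.Theory.

Lemma pboolP (P : Prop) : reflect P (pbool P).
Proof. by rewrite /pbool; case: excluded_middle_informative => h; constructor. Qed.

Section FiniteSpace.
Variables (X : finType) (opens : {set {set X}}).
Hypothesis top : is_topology opens.

Lemma mem_cl1 x : x \in cl opens [set x].
Proof. by rewrite inE; apply/forallP => B; apply/implyP => /andP[_]; rewrite sub1set. Qed.

Lemma cl1_trans x y z :
  y \in cl opens [set x] -> z \in cl opens [set y] -> z \in cl opens [set x].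
Proof.
rewrite !inE => /forallP yx /forallP zy; apply/forallP => B; apply/implyP => /andP[cB].
rewrite sub1set => xB; apply: (implyP (zy B)); rewrite cB sub1set.
by apply: (implyP (yx B)); rewrite cB sub1set.
Qed.

Lemma closedbU (A B : {set X}) : closedb opens A -> closedb opens B -> closedb opens (A :|: B).
Proof. by case: top => _ _ _ openI; rewrite /closedb setCU; apply: openI. Qed.

Lemma closedb_cl (A : {set X}) : closedb opens (cl opens A).
Proof.
case: top => open0 _ openU _.
have -> : cl opens A = ~: \bigcup_(B | closedb opens B && (A \subset B)) ~: B.
  apply/setP => x; rewrite inE in_setC; apply/idP/idP => [/forallP xB | xN].
    by apply/bigcupP => -[B hB]; rewrite inE (implyP (xB B) hB).
  apply/forallP => B; apply/implyP => hB; apply: contraNT xN => xNB.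
  by apply/bigcupP; exists B; rewrite ?inE.
rewrite /closedb setCK; apply: (big_ind (fun U => U \in opens)) => // B /andP[] //.
Qed.

Lemma downward_closedb (A : {set X}) :
  (forall x y, x \in A -> y \in cl opens [set x] -> y \in A) -> closedb opens A.
Proof.
move=> downA; have -> : A = \bigcup_(x in A) cl opens [set x].
  apply/setP => y; apply/idP/bigcupP => [yA | [x xA yx]]; last exact: downA yx.
  by exists y; rewrite ?mem_cl1.
apply: (big_ind (closedb opens)) => [|B C|x _]; [|exact: closedbU|exact: closedb_cl].
by case: top => _ openT _ _; rewrite /closedb setC0.
Qed.

End FiniteSpace.

Section Multivector.
Variables (X : finType) (opens : {set {set X}}) (V : {set {set X}}).
Hypotheses (top : is_topology opens) (mvf : multivector_field opens V).

Lemma mvclass_eq x y : y \in mvclass V x -> mvclass V y = mvclass V x.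
Proof. by case: mvf => /and3P[_ trivV _] _; apply: same_pblock. Qed.

Lemma Pi_mvclass x y : y \in mvclass V x -> y \in Pi opens V x.
Proof. by rewrite /Pi in_setU => ->. Qed.

Lemma Pi_cl1 x y : y \in cl opens [set x] -> y \in Pi opens V x.
Proof. by rewrite /Pi in_setU => ->; rewrite orbT. Qed.

Section Isolated.
Variables N S : {set X}.
Hypothesis NS : isolates opens V N S.

Lemma isolates_two_steps x y z :
  x \in S -> z \in S -> y \in Pi opens V x -> z \in Pi opens V y -> y \in S.
Proof.
case: NS => _ SN pathS PiSN xS zS yx zy.
have yN : y \in N by apply: (subsetP PiSN); apply/bigcupP; exists x.
have := pathS x [:: y; z]; rewrite /sol_path /= yx zy yN !(subsetP SN) //=.
by move/(_ isT isT xS zS) => /and3P[].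
Qed.

Lemma isolates_compatible : compatibleb V S.
Proof.
apply/forallP => x; case: (boolP [disjoint _ & _]) => //= /pred0Pn[y /andP[yx yS]].
apply/subsetP => z zx; apply: (isolates_two_steps yS yS); apply: Pi_mvclass.
  by rewrite (mvclass_eq yx).
by rewrite (mvclass_eq zx).
Qed.

Lemma isolates_convex x y z : z \in S -> x \in S ->
  y \in cl opens [set z] -> x \in cl opens [set y] -> y \in S.
Proof. by move=> zS xS yz xy; apply: (isolates_two_steps zS xS); apply: Pi_cl1. Qed.

Lemma isolates_locally_closed : locally_closedb opens S.
Proof.
pose U := [set y | [exists a in S, a \in cl opens [set y]]].
pose C := [set y | [exists a in S, y \in cl opens [set a]]].
have inU y : (y \in U) = [exists a in S, a \in cl opens [set y]] by rewrite in_set.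
have inC y : (y \in C) = [exists a in S, y \in cl opens [set a]] by rewrite in_set.
apply/existsP; exists U; apply/existsP; exists C; apply/and3P; split.
- rewrite -[U]setCK; apply: downward_closedb => // y z; rewrite !in_setC !inU => yU zy.
  apply: contra yU => /existsP[a /andP[aS az]].
  by apply/existsP; exists a; rewrite aS (cl1_trans zy az).
- apply: downward_closedb => // y z; rewrite !inC => /existsP[a /andP[aS ya]] zy.
  by apply/existsP; exists a; rewrite aS (cl1_trans ya zy).
- rewrite eqEsubset; apply/andP; split; apply/subsetP => y; rewrite in_setI inU inC.
    by move=> yS; apply/andP; split; apply/existsP; exists y; rewrite yS mem_cl1.
  case/andP=> /existsP[a /andP[aS ay]] /existsP[b /andP[bS yb]].
  exact: (isolates_convex bS aS).
Qed.

End Isolated.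

Lemma sub_hull (A : {set X}) : A \subset hull opens V A.
Proof.
apply/subsetP => x xA; rewrite inE; apply/forallP => B.
by apply/implyP => /and3P[_ _ /subsetP]; apply.
Qed.

Lemma hull_sub_isolated (A S : {set X}) :
  isolated_invariant opens V S -> A \subset S -> hull opens V A \subset S.
Proof.
case=> _ [N NS] AS; apply/subsetP => x; rewrite inE => /forallP /(_ S).
by rewrite (isolates_compatible NS) (isolates_locally_closed NS) AS => /implyP; apply.
Qed.

Lemma InvP (A : {set X}) x :
  reflect (exists phi, [/\ essential opens V phi, forall t, phi t \in A & phi 0%R = x])
          (x \in Inv opens V A).
Proof. by rewrite inE; apply: pboolP. Qed.

Lemma Inv_subset (A B : {set X}) : A \subset B -> Inv opens V A \subset Inv opens V B.
Proof.
move/subsetP=> AB; apply/subsetP => x /InvP[phi [ess phiA phi0]].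
by apply/InvP; exists phi; split=> // t; apply: AB.
Qed.

Lemma conn_setP (A B : {set X}) x :
  reflect (exists phi, [/\ essential opens V phi, phi 0%R = x,
                          alpha opens V phi \subset A & omega opens V phi \subset B])
          (x \in conn_set opens V A B).
Proof. by rewrite inE; apply: pboolP. Qed.

End Multivector.

Section Solutions.
Local Open Scope ring_scope.
Variable X : finType.
Implicit Types (phi psi : int -> X) (t k : int).

Definition shift phi k t := phi (t + k).

Definition splice phi psi t := if t <= 0 then phi t else psi t.

Lemma uim_minusP phi x :
  reflect (forall t, exists2 s, s <= t & phi s = x) (x \in uim_minus phi).
Proof.
rewrite inE; apply: (iffP (pboolP _)) => past t; last first.
  by move=> _; have [s ? ?] := past t; exists s.
have [t_le0|t_gt0] := lerP t 0; first by have [s [? ?]] := past t t_le0; exists s.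
by have [s [? ?]] := past 0 (lexx 0); exists s => //; lia.
Qed.

Lemma uim_plus_rev phi : uim_plus phi = uim_minus (fun t => phi (- t)).
Proof.
apply/setP => x; rewrite !inE; apply/pboolP/pboolP => recur t t_sgn.
  have /recur[s [? ?]] : 0 <= - t by lia.
  by exists (- s); rewrite opprK; split=> //; lia.
have /recur[s [? ?]] : - t <= 0 by lia.
by exists (- s); split=> //; lia.
Qed.

Lemma uim_minus_shift phi k : uim_minus (shift phi k) = uim_minus phi.
Proof.
apply/setP => x; apply/uim_minusP/uim_minusP => past t.
  by have [s ? ?] := past (t - k); exists (s + k) => //; lia.
by have [s ? ?] := past (t + k); exists (s - k); rewrite /shift ?subrK //; lia.
Qed.

Lemma uim_minus_eq_past phi psi t0 :
  (forall t, t <= t0 -> phi t = psi t) -> uim_minus phi = uim_minus psi.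
Proof.
move=> eq_past; apply/setP => x; apply/uim_minusP/uim_minusP => past t;
  have [s] := past (Num.min t t0); rewrite le_min => /andP[st st0] phis;
  by exists s; rewrite // ?eq_past // -?eq_past.
Qed.

Lemma uim_minus_neq0 phi : exists x, x \in uim_minus phi.
Proof.
apply: NNPP => none.
have avoid x : exists t, forall s, s <= t -> phi s != x.
  apply: NNPP => recur; apply: none; exists x; apply/uim_minusP => t.
  apply: NNPP => late; apply: recur; exists t => s st; apply/eqP => phis.
  by apply: late; exists s.
have avoid_all (l : seq X) : exists t, forall s, s <= t -> phi s \notin l.
  elim: l => [|x l [t avoid_l]]; first by exists 0.
  have [t' avoid_x] := avoid x; exists (Num.min t t') => s.
  by rewrite le_min in_cons negb_or => /andP[st st']; rewrite avoid_x ?avoid_l.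
have [t avoid_X] := avoid_all (enum X).
by have := avoid_X t (lexx t); rewrite mem_enum.
Qed.

Lemma uim_minus_sub phi (A : {set X}) :
  (forall t, phi t \in A) -> uim_minus phi \subset A.
Proof. by move=> phiA; apply/subsetP => x /uim_minusP/(_ 0)[s _ <-]. Qed.

Lemma uim_plus_shift phi k : uim_plus (shift phi k) = uim_plus phi.
Proof.
rewrite !uim_plus_rev -(uim_minus_shift (fun t => phi (- t)) (- k)).
by apply: (uim_minus_eq_past (t0 := 0)) => t _; rewrite /shift opprD opprK.
Qed.

Lemma uim_minus_splice phi psi : uim_minus (splice phi psi) = uim_minus phi.
Proof. by apply: (uim_minus_eq_past (t0 := 0)) => t t_le0; rewrite /splice t_le0. Qed.

Lemma uim_plus_splice phi psi : uim_plus (splice phi psi) = uim_plus psi.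
Proof.
rewrite !uim_plus_rev; apply: (uim_minus_eq_past (t0 := -1)) => t t_le.
by rewrite /splice ifF //; lia.
Qed.

Lemma uim_plus_neq0 phi : exists x, x \in uim_plus phi.
Proof. by rewrite uim_plus_rev; apply: uim_minus_neq0. Qed.

Lemma uim_plus_sub phi (A : {set X}) :
  (forall t, phi t \in A) -> uim_plus phi \subset A.
Proof. by move=> phiA; rewrite uim_plus_rev; apply: uim_minus_sub. Qed.

End Solutions.

Section EssentialSolutions.
Local Open Scope ring_scope.
Variables (X : finType) (opens : {set {set X}}) (V : {set {set X}}).
Hypothesis mvf : multivector_field opens V.
Implicit Types (phi psi : int -> X) (k : int).

Lemma essential_exit_before phi z k : essential opens V phi ->
  ~ critical opens (mvclass V z) -> exists2 s, s < k & phi s \notin mvclass V z.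
Proof.
case=> _ exits nc; have [zk|] := boolP (phi (k - 1) \in mvclass V z); last first.
  by exists (k - 1) => //; lia.
rewrite -(mvclass_eq mvf zk) in nc *.
by have [[s [? ?]] _] := exits _ nc k; exists s.
Qed.

Lemma essential_exit_after phi z k : essential opens V phi ->
  ~ critical opens (mvclass V z) -> exists2 s, k < s & phi s \notin mvclass V z.
Proof.
case=> _ exits nc; have [zk|] := boolP (phi (k + 1) \in mvclass V z); last first.
  by exists (k + 1) => //; lia.
rewrite -(mvclass_eq mvf zk) in nc *.
by have [_ [s [? ?]]] := exits _ nc k; exists s.
Qed.

Lemma essential_shift phi k : essential opens V phi -> essential opens V (shift phi k).
Proof.
move=> ess; split=> [i|t nc m]; rewrite /shift.
  by rewrite addrAC; case: ess.
split.
  have [s sm phis] := essential_exit_before (m + k) ess nc.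
  by exists (s - k); rewrite subrK; split=> //; lia.
have [s ms phis] := essential_exit_after (m + k) ess nc.
by exists (s - k); rewrite subrK; split=> //; lia.
Qed.

Lemma essential_splice phi psi : essential opens V phi -> essential opens V psi ->
  psi 1 \in Pi opens V (phi 0) -> essential opens V (splice phi psi).
Proof.
move=> ess_phi ess_psi step; split=> [i|t nc m]; rewrite /splice.
  have [i1_le0|i1_gt0] := lerP (i + 1) 0.
    have -> : i <= 0 by lia.
    by case: ess_phi.
  have [i_le0|_] := lerP i 0; last by case: ess_psi.
  by have -> : i = 0 by lia.
split.
  have [s sm phis] := essential_exit_before (Num.min m 0) ess_phi nc.
  by exists s; move: sm; rewrite lt_min => /andP[-> /ltW->].
have [s ms psis] := essential_exit_after (Num.max m 0) ess_psi nc.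
by exists s; move: ms; rewrite gt_max => /andP[-> s_gt0]; rewrite leNgt s_gt0.
Qed.

End EssentialSolutions.

Section LimitSets.
Local Open Scope ring_scope.
Variables (X : finType) (opens : {set {set X}}) (V : {set {set X}}).
Hypotheses (top : is_topology opens) (mvf : multivector_field opens V).
Implicit Types (phi psi : int -> X) (A B S : {set X}).

Lemma alpha_shift phi k : alpha opens V (shift phi k) = alpha opens V phi.
Proof. by rewrite /alpha uim_minus_shift. Qed.

Lemma omega_shift phi k : omega opens V (shift phi k) = omega opens V phi.
Proof. by rewrite /omega uim_plus_shift. Qed.

Lemma alpha_splice phi psi : alpha opens V (splice phi psi) = alpha opens V phi.
Proof. by rewrite /alpha uim_minus_splice. Qed.

Lemma omega_splice phi psi : omega opens V (splice phi psi) = omega opens V psi.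
Proof. by rewrite /omega uim_plus_splice. Qed.

Lemma alpha_image phi : exists t, phi t \in alpha opens V phi.
Proof.
have [x xu] := uim_minus_neq0 phi; have /uim_minusP/(_ 0)[t _ phit] := xu.
by exists t; rewrite phit (subsetP (sub_hull _ _ _) _ xu).
Qed.

Lemma omega_image phi : exists t, phi t \in omega opens V phi.
Proof.
have [x xu] := uim_plus_neq0 phi.
have /uim_minusP/(_ 0)[t _ phit] : x \in uim_minus (fun t => phi (- t)).
  by rewrite -uim_plus_rev.
by exists (- t); rewrite phit (subsetP (sub_hull _ _ _) _ xu).
Qed.

Lemma alpha_sub phi S : isolated_invariant opens V S ->
  (forall t, phi t \in S) -> alpha opens V phi \subset S.
Proof. by move=> isoS phiS; apply: hull_sub_isolated => //; apply: uim_minus_sub. Qed.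

Lemma omega_sub phi S : isolated_invariant opens V S ->
  (forall t, phi t \in S) -> omega opens V phi \subset S.
Proof. by move=> isoS phiS; apply: hull_sub_isolated => //; apply: uim_plus_sub. Qed.

Lemma conn_set_orbit phi A B t : essential opens V phi ->
  alpha opens V phi \subset A -> omega opens V phi \subset B ->
  phi t \in conn_set opens V A B.
Proof.
move=> ess phiA phiB; apply/conn_setP; exists (shift phi t).
by rewrite alpha_shift omega_shift /shift add0r; split=> //; apply: essential_shift.
Qed.

Lemma isolated_invariant_sub_conn_set S :
  isolated_invariant opens V S -> S \subset conn_set opens V S S.
Proof.
move=> isoS; apply/subsetP => x; case: (isoS) => invS _.
rewrite -{1}invS => /InvP[phi [ess phiS <-]].
by apply: conn_set_orbit; [|apply: alpha_sub|apply: omega_sub].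
Qed.

End LimitSets.

Section Morse.
Variables (X : finType) (opens : {set {set X}}) (V : {set {set X}}).
Variables (d : Order.disp_t) (P : finPOrderType d) (M : P -> {set X}).
Hypotheses (top : is_topology opens) (mvf : multivector_field opens V).
Hypothesis morse : morse_decomposition opens V M.
Implicit Types (phi : int -> X) (J : {set P}).

Lemma morse_index_eq p q x : x \in M p -> x \in M q -> p = q.
Proof.
case: morse => disjM _ _ xp xq; apply/eqP; apply: contraT => /disjM/disjointFr/(_ xp).
by rewrite xq.
Qed.

Lemma alpha_index_eq phi p q :
  alpha opens V phi \subset M p -> alpha opens V phi \subset M q -> p = q.
Proof.
have [t phit] := alpha_image opens V phi.
by move=> /subsetP/(_ _ phit) + /subsetP/(_ _ phit); apply: morse_index_eq.
Qed.

Lemma omega_index_eq phi p q :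
  omega opens V phi \subset M p -> omega opens V phi \subset M q -> p = q.
Proof.
have [t phit] := omega_image opens V phi.
by move=> /subsetP/(_ _ phit) + /subsetP/(_ _ phit); apply: morse_index_eq.
Qed.

Lemma morse_alpha_omega phi : essential opens V phi -> exists p q,
  [/\ (p <= q)%O, alpha opens V phi \subset M q & omega opens V phi \subset M p].
Proof.
move=> ess; case: morse => _ isoM /(_ phi ess) [[r phir]|[p [q [/ltW pq ? ?]]]].
  by exists r, r; split; [|apply: alpha_sub|apply: omega_sub].
by exists p, q.
Qed.

Lemma conn_set_le a b c e y : y \in conn_set opens V (M a) (M b) ->
  y \in conn_set opens V (M c) (M e) -> (e <= a)%O.
Proof.
move=> /conn_setP[phi [ess_phi phi0 phia _]] /conn_setP[psi [ess_psi psi0 _ psie]].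
have step : psi 1%R \in Pi opens V (phi 0%R).
  by rewrite phi0 -psi0 -[1%R]add0r; case: ess_psi.
have [p [q []]] := morse_alpha_omega (essential_splice mvf ess_phi ess_psi step).
by rewrite alpha_splice omega_splice => pq /(alpha_index_eq phia) -> /(omega_index_eq psie) ->.
Qed.

Lemma MIP J x : reflect
  (exists i j, [/\ i \in J, j \in J & x \in conn_set opens V (M i) (M j)])
  (x \in MI opens V M J).
Proof.
apply: (iffP bigcupP) => [[i iJ /bigcupP[j jJ xij]]|[i [j [iJ jJ xij]]]].
  by exists i, j.
by exists i => //; apply/bigcupP; exists j.
Qed.

Lemma MIS J1 J2 : J1 \subset J2 -> MI opens V M J1 \subset MI opens V M J2.
Proof.
move/subsetP=> J12; apply/subsetP => x /MIP[i [j [iJ jJ xij]]].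
by apply/MIP; exists i, j; split=> //; apply: J12.
Qed.

Lemma MI_sub_Inv J : MI opens V M J \subset Inv opens V (MI opens V M J).
Proof.
apply/subsetP => x /MIP[i [j [iJ jJ /conn_setP[phi [ess <- phii phij]]]]].
apply/InvP; exists phi; split=> // t; apply/MIP; exists i, j; split=> //.
exact: conn_set_orbit.
Qed.

Section ForwardInvariance.
Hypothesis Xinv : mv_invariant opens V [set: X].

Lemma conn_set_Pi i j x y : x \in conn_set opens V (M i) (M j) -> y \in Pi opens V x ->
  exists2 p, (p <= i)%O & y \in conn_set opens V (M i) (M p).
Proof.
move=> /conn_setP[phi [ess_phi phi0 phii _]] yx.
have /InvP[psi [ess_psi _ psi0]] : y \in Inv opens V [set: X] by rewrite Xinv inE.
have step : shift psi (-1) 1 \in Pi opens V (phi 0%R) by rewrite /shift addrN psi0 phi0.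
have ess := essential_splice mvf ess_phi (essential_shift mvf (-1) ess_psi) step.
have [p [q [pq]]] := morse_alpha_omega ess.
rewrite alpha_splice => /(alpha_index_eq phii) iq chip; exists p; first by rewrite iq.
have := conn_set_orbit mvf 1%R ess; rewrite alpha_splice => /(_ _ _ phii chip).
by rewrite /splice /shift addrN psi0.
Qed.

Lemma MI_Pi J : (forall a b, (a <= b)%O -> b \in J -> a \in J) ->
  forall x y, x \in MI opens V M J -> y \in Pi opens V x -> y \in MI opens V M J.
Proof.
move=> downJ x y /MIP[i [j [iJ jJ xij]]] yx; have [p pi yip] := conn_set_Pi xij yx.
by apply/MIP; exists i, p; split=> //; apply: downJ pi iJ.
Qed.

Lemma closedb_MI J : (forall a b, (a <= b)%O -> b \in J -> a \in J) ->
  closedb opens (MI opens V M J).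
Proof.
by move=> downJ; apply: downward_closedb => // x y xJ /(Pi_cl1 V); apply: MI_Pi.
Qed.

End ForwardInvariance.

Section ConvexIndex.
Variable I : {set P}.

Lemma down_le_closed a b : (a <= b)%O -> b \in down_le I -> a \in down_le I.
Proof.
move=> ab; rewrite !inE => /existsP[c /andP[cI bc]].
by apply/existsP; exists c; rewrite cI (le_trans ab bc).
Qed.

Lemma sub_down_le : I \subset down_le I.
Proof. by apply/subsetP => i iI; rewrite inE; apply/existsP; exists i; rewrite iI lexx. Qed.

Lemma exit_set_index e y : y \in M e ->
  y \in MI opens V M (down_le I) :\: MI opens V M (down_lt I) -> e \in I.
Proof.
case: morse => _ isoM _ ye; rewrite inE => /andP[yN2 /MIP[a [b [aJ _ yab]]]].
have yee := subsetP (isolated_invariant_sub_conn_set top mvf (isoM e)) y ye.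
have eJ := down_le_closed (conn_set_le yab yee) aJ.
apply: contraNT yN2 => eNI; apply/MIP; exists e, e.
by rewrite /down_lt inE eNI eJ.
Qed.

Lemma Inv_exit_sub_MI :
  Inv opens V (MI opens V M (down_le I) :\: MI opens V M (down_lt I)) \subset MI opens V M I.
Proof.
apply/subsetP => x /InvP[phi [ess phiN <-]].
have [p [q [_ phiq phip]]] := morse_alpha_omega ess.
have [s /(subsetP phiq) sq] := alpha_image opens V phi.
have [t /(subsetP phip) tp] := omega_image opens V phi.
apply/MIP; exists q, p; split.
- exact: exit_set_index sq (phiN s).
- exact: exit_set_index tp (phiN t).
- exact: conn_set_orbit.
Qed.

Hypothesis convI : convex I.

Lemma down_lt_closed a b : (a <= b)%O -> b \in down_lt I -> a \in down_lt I.
Proof.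
move=> ab; rewrite !in_setD => /andP[bNI bI]; rewrite (down_le_closed ab bI) andbT.
apply: contra bNI => aI; move: bI; rewrite inE => /existsP[c /andP[cI bc]].
exact: convI aI cI ab bc.
Qed.

Lemma MI_notin_down_lt x : x \in MI opens V M I -> x \notin MI opens V M (down_lt I).
Proof.
case/MIP=> i [j [iI jI xij]]; apply/MIP => -[a [b [aJ _ xab]]].
move: aJ; rewrite !inE => /andP[aNI /existsP[c /andP[cI ac]]].
by move/negP: aNI; apply; apply: convI jI cI (conn_set_le xab xij) ac.
Qed.

End ConvexIndex.
End Morse.

Theorem theorem7p7 (X : finType) (opens : {set {set X}}) (V : {set {set X}})
    {d : Order.disp_t} (P : finPOrderType d) (M : P -> {set X}) (I : {set P}) :
  is_topology opens -> is_T0 opens ->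
  multivector_field opens V ->
  mv_invariant opens V [set: X] ->
  morse_decomposition opens V M ->
  convex I ->
  index_pair opens V (MI opens V M I)
    (MI opens V M (down_le I)) (MI opens V M (down_lt I)).
Proof.
move=> top _ mvf Xinv morse convI.
have down_le_I := @down_le_closed _ _ I; have down_lt_I := down_lt_closed convI.
have forward := MI_Pi top mvf morse Xinv.
split.
- by rewrite !(closedb_MI top mvf morse Xinv).
- exact/MIS/subsetDl.
- by move=> x y xP2 yx _; apply: forward down_lt_I _ _ xP2 yx.
- by move=> x xP1 /subsetP[y]; apply: forward down_le_I _ _ xP1.
apply/eqP; rewrite eqEsubset Inv_exit_sub_MI // andbT.
apply: subset_trans (MI_sub_Inv M mvf I) _; apply: Inv_subset; apply/subsetP => x xI.
rewrite in_setD (MI_notin_down_lt top mvf morse convI) //.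
exact: (subsetP (MIS opens V M (sub_down_le I))).
Qed.
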